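(* Let $m\ge1$ and let $\pi\in\mathfrak{S}_{3m}$ avoid $132$ and consist only of $3$-cycles. Index its $3$-cycles as having element sets $\{a_i<b_i<c_i\}$, $i=1,\dots,m$, with $b_1<b_2<\dots<b_m$, and let $D_\pi$ be its associated Dyck word. If the indices $j$ and $j+1$ lie in the same free block of $D_\pi$, then the $3$-cycles on $\{a_j,b_j,c_j\}$ and $\{a_{j+1},b_{j+1},c_{j+1}\}$ are of the same form. Furthermore, if these two $3$-cycles are of different forms, then $D_\pi$ has a hit at position $2j$.
   Context: A permutation avoids $132$ if there are no indices $i<j<k$ with $\pi_i<\pi_k<\pi_j$. A $3$-cycle on elements $a<b<c$ has form $(1,2,3)$ if it is $a\mapsto b\mapsto c\mapsto a$, and form $(1,3,2)$ if it is $a\mapsto c\mapsto b\mapsto a$. With $B=\{b_i\}$ and $C=\{c_i\}$, the associated Dyck word $D_\pi$ is the word of length $2m$ obtained by listing the elements of $B\cup C$ in increasing order and writing $0$ for each element of $B$ and $1$ for each element of $C$. For a Dyck word $D$ of semilength $m$ (a word with $m$ zeros and $m$ ones in which every prefix has at least as many zeros as ones): indices $i$ and $i+1$ ($1\le i<m$) are linked if the $i$-th and $(i+1)$-st $0$ of $D$ occupy adjacent positions and the $i$-th and $(i+1)$-st $1$ of $D$ occupy adjacent positions; the free blocks of $D$ are the maximal intervals of $\{1,\dots,m\}$ in which all consecutive indices are linked. $D$ has a hit at position $2j$ ($0\le j\le m$) if its prefix of length $2j$ contains exactly $j$ zeros and $j$ ones. *)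

From mathcomp Require Import all_boot all_order all_fingroup.
Set Implicit Arguments. Unset Strict Implicit. Unset Printing Implicit Defensive.

Section Defs.
Variable n : nat.
Implicit Types (s : {perm 'I_n}) (x : 'I_n).

Definition avoids132 s : Prop :=
  forall i j k : 'I_n, i < j -> j < k -> ~ (s i < s k < s j).

Definition only_3cycles s : Prop :=
  forall x, s x != x /\ s (s (s x)) = x.

Definition min3 (x y z : 'I_n) : 'I_n :=
  if x < y then (if x < z then x else z) else (if y < z then y else z).
Definition max3 (x y z : 'I_n) : 'I_n :=
  if x < y then (if y < z then z else y) else (if x < z then z else x).
Definition cyc_min s x := min3 x (s x) (s (s x)).
Definition cyc_max s x := max3 x (s x) (s (s x)).

Definition Bset s : {set 'I_n} := [set x | cyc_min s x < x < cyc_max s x].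
Definition Cset s : {set 'I_n} := [set x | x == cyc_max s x].

(* b_1 < b_2 < ... < b_m : the increasing enumeration of B (index j is entry j-1) *)
Definition Bsorted s : seq 'I_n := sort (fun x y : 'I_n => x <= y) (enum (Bset s)).

(* the 3-cycle containing b (a middle element) has form (1,2,3): a -> b -> c -> a *)
Definition form123 s b := s (cyc_min s b) == b.
(* ... form (1,3,2): a -> c -> b -> a *)
Definition form132 s b := s (cyc_min s b) == cyc_max s b.

(* Dyck word D_pi: elements of B u C in increasing order, false (=0) for B, true (=1) for C *)
Definition dyck_word s : seq bool :=
  [seq (x \in Cset s) | x <- sort (fun x y : 'I_n => x <= y) (enum (Bset s :|: Cset s))].
End Defs.

(* 0-based positions of the letters equal to b in D *)
Definition positions (b : bool) (D : seq bool) : seq nat :=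
  [seq p <- iota 0 (size D) | nth (~~ b) D p == b].

(* indices i and i+1 (1-based, 1 <= i < m) are linked: the i-th and (i+1)-st 0
   occupy adjacent positions, and so do the i-th and (i+1)-st 1 *)
Definition linked (D : seq bool) (i : nat) : bool :=
  (nth 0 (positions false D) i == (nth 0 (positions false D) i.-1).+1) &&
  (nth 0 (positions true D) i == (nth 0 (positions true D) i.-1).+1).

(* i and k lie in the same free block (maximal interval in which all consecutive
   indices are linked) iff every consecutive pair between them is linked *)
Definition same_free_block (D : seq bool) (i k : nat) : Prop :=
  forall l, minn i k <= l -> l < maxn i k -> linked D l.

Definition hit (D : seq bool) (j : nat) : Prop :=
  count (fun c => ~~ c) (take (2 * j) D) = j /\ count id (take (2 * j) D) = j.

Definition seq_at (T : Type) (s : seq T) (i : nat) : option T := nth None (map Some s) i.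

From mathcomp Require Import all_boot all_order all_fingroup.
From mathcomp Require Import zify.
Set Implicit Arguments. Unset Strict Implicit. Unset Printing Implicit Defensive.

(** Let [a < b < c] be a 3-cycle of [s]; its form is [a -> b -> c] or
    [a -> c -> b].  If [b < b'] are middle elements of cycles of different
    forms and [b' < c], then [(a, b, c')] or [(b, b', c)] is an occurrence
    of 132; hence [c < b'].  For consecutive middles [b_j < b_(j+1)] of
    different forms this shows that every cycle whose middle lies below
    [b_(j+1)] also has its maximum below [b_(j+1)], so the letters of [D_pi]
    below [b_(j+1)] are [j] zeros and [j] ones: a hit at [2j].  At a hit at
    [2j], the [j]-th 0 and the [j]-th 1 lie in the prefix and the next ones
    do not, so if [j] and [j+1] were linked, both the [j]-th 0 and the
    [j]-th 1 would be the last letter of the prefix. *)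

Section SortedPrefix.
Variables (T : eqType) (leT : rel T) (p : pred T).
Hypothesis leT_tr : transitive leT.
Hypothesis p_downward : forall x y, leT x y -> p y -> p x.

Lemma sorted_filter_cat s : sorted leT s -> filter p s ++ filter (predC p) s = s.
Proof.
elim: s => //= x s IHs x_s; case: ifP => [px | /negbT npx] /=.
  by rewrite IHs ?(path_sorted x_s).
have s_np : all (predC p) s.
  apply: sub_all (order_path_min leT_tr x_s) => y xy.
  by apply: contra npx; apply: p_downward.
have /eqP-> : filter p s == [::] by rewrite -[_ == _]negbK -has_filter -all_predC s_np.
by rewrite (all_filterP s_np).
Qed.

Lemma take_count_sorted s : sorted leT s -> take (count p s) s = filter p s.
Proof.
move=> s_sorted; rewrite -{2}(sorted_filter_cat s_sorted) take_size_cat //.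
by rewrite size_filter.
Qed.

Lemma nth_sorted_count x0 s i : sorted leT s -> i < size s ->
  p (nth x0 s i) = (i < count p s).
Proof.
move=> s_sorted i_s; rewrite -[in LHS](sorted_filter_cat s_sorted) nth_cat size_filter.
case: ltnP => [i_p | p_i].
  by apply: (all_nthP x0 (filter_all p s)); rewrite size_filter.
apply/negbTE; apply: (all_nthP x0 (filter_all (predC p) s)).
by rewrite -(count_predC p s) in i_s; rewrite size_filter; lia.
Qed.
End SortedPrefix.

Definition ord_sort n (A : {set 'I_n}) : seq 'I_n :=
  sort (fun x y : 'I_n => x <= y) (enum A).

Section OrdSort.
Variables (n : nat) (A : {set 'I_n}).
Local Notation L := (ord_sort A).

Let ltn_ord_trans : transitive (fun x y : 'I_n => x < y).
Proof. by move=> y x z; apply: ltn_trans. Qed.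

Let leq_ord_trans : transitive (fun x y : 'I_n => x <= y).
Proof. by move=> y x z; apply: leq_trans. Qed.

Let leq_ord_refl : reflexive (fun x y : 'I_n => x <= y).
Proof. by move=> x; apply: leqnn. Qed.

Let ltn_ord_below v : forall x y : 'I_n, x < y -> y < v -> x < v.
Proof. by move=> x y; apply: ltn_trans. Qed.

Lemma ord_sort_leq_sorted : sorted (fun x y : 'I_n => x <= y) L.
Proof. by apply: sort_sorted => x y; apply: leq_total. Qed.

Lemma ord_sort_ltn_sorted : sorted (fun x y : 'I_n => x < y) L.
Proof.
have -> : (fun x y : 'I_n => x < y) = relpre val ltn by [].
rewrite -sorted_map ltn_sorted_uniq_leq (map_inj_uniq val_inj) sort_uniq enum_uniq.
by rewrite sorted_map ord_sort_leq_sorted.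
Qed.

Lemma mem_ord_sort : L =i A.
Proof. by move=> x; rewrite mem_sort mem_enum. Qed.

Lemma count_ord_sort (q : pred 'I_n) : count q L = #|[set x in A | q x]|.
Proof.
rewrite count_sort cardsE cardE /enum_mem size_filter count_filter.
by apply: eq_count => x /=; rewrite andbC.
Qed.

Lemma ord_sort_nth_lt x0 i : i.+1 < size L -> nth x0 L i < nth x0 L i.+1.
Proof.
move=> i_L; apply: (sorted_ltn_nth ltn_ord_trans x0 ord_sort_ltn_sorted).
all: by rewrite ?inE ?(ltnW i_L).
Qed.

Lemma nth_ord_sort_lt x0 i v : i < size L ->
  (nth x0 L i < v) = (i < count (fun x : 'I_n => x < v) L).
Proof.
move=> i_L; apply: (nth_sorted_count _ _ x0 ord_sort_ltn_sorted i_L).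
  exact: ltn_ord_trans.
exact: ltn_ord_below.
Qed.

Lemma take_count_ord_sort v :
  take (count (fun x : 'I_n => x < v) L) L = filter (fun x : 'I_n => x < v) L.
Proof.
apply: (take_count_sorted _ _ ord_sort_ltn_sorted); first exact: ltn_ord_trans.
exact: ltn_ord_below.
Qed.

Lemma card_below_ord_sort x0 i : i < size L -> #|[set x in A | x < nth x0 L i]| = i.
Proof.
move=> i_L; rewrite -count_ord_sort; apply/eqP; rewrite eqn_leq.
rewrite leqNgt -(nth_ord_sort_lt x0) // ltnn /=.
case: i i_L => [//|i] i_L.
by have := ord_sort_nth_lt x0 i_L; rewrite (nth_ord_sort_lt x0) ?(ltnW i_L).
Qed.

Lemma ord_sort_between x0 i x : i.+1 < size L -> x \in A ->
  x < nth x0 L i.+1 -> x <= nth x0 L i.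
Proof.
move=> i_L xA; rewrite -mem_ord_sort in xA; rewrite -(nth_index x0 xA).
rewrite nth_ord_sort_lt ?index_mem // count_ord_sort card_below_ord_sort // ltnS.
apply: (sorted_leq_nth leq_ord_trans leq_ord_refl x0 ord_sort_leq_sorted).
all: by rewrite ?inE ?index_mem ?(ltnW i_L).
Qed.
End OrdSort.

Section Positions.
Variables (b : bool) (D : seq bool).
Local Notation P := (positions b D).

Lemma positions_sorted : sorted ltn P.
Proof. exact/sorted_filter/iota_ltn_sorted/ltn_trans. Qed.

Lemma count_positions_lt k : count (fun p => p < k) P = count (pred1 b) (take k D).
Proof.
rewrite /positions count_filter.
have [kD | /ltnW Dk] := leqP k (size D).
  rewrite -(subnKC kD) iotaD count_cat add0n.
  rewrite (@eq_in_count _ _ pred0 (iota k _)) ?count_pred0 ?addn0; last first.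
    by move=> p; rewrite mem_iota /= => /andP[/leq_gtF->].
  rewrite -(map_nth_iota0 (~~ b) kD) count_map.
  by apply: eq_in_count => p; rewrite mem_iota /= => ->.
rewrite take_oversize // -[in RHS](take_size D) -(map_nth_iota0 (~~ b) (leqnn _)) count_map.
by apply: eq_in_count => p; rewrite mem_iota add0n /= => /leq_trans/(_ Dk) ->.
Qed.

Lemma nth_positions_lt x0 i k : i < size P ->
  (nth x0 P i < k) = (i < count (pred1 b) (take k D)).
Proof.
move=> i_P; rewrite -count_positions_lt (set_nth_default 0) //.
apply: (nth_sorted_count _ _ _ positions_sorted i_P).
  by move=> y x z; apply: ltn_trans.
by move=> x y; apply: ltn_trans.
Qed.

Lemma positions_adjacent_cut k j : 0 < j -> count (pred1 b) (take k D) = j ->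
  nth 0 P j = (nth 0 P j.-1).+1 -> k.-1 \in P.
Proof.
move=> j_gt0 cnt adj.
have j_P : j < size P.
  by rewrite ltnNge; apply/negP => /(nth_default 0); rewrite adj.
have prev_P : j.-1 < size P := leq_ltn_trans (leq_pred j) j_P.
have prev_lt : nth 0 P j.-1 < k by rewrite nth_positions_lt // cnt prednK.
have next_ge : k <= nth 0 P j by rewrite leqNgt nth_positions_lt // cnt ltnn.
have <- : (nth 0 P j.-1).+1 = k by apply/eqP; rewrite eqn_leq prev_lt -adj.
exact: mem_nth.
Qed.
End Positions.

Lemma positions_disjoint D p : p \in positions false D -> p \in positions true D -> False.
Proof.
rewrite !mem_filter => /andP[/eqP D0 p_D] /andP[/eqP D1 _].
by rewrite (set_nth_default false) ?D1 in D0; rewrite mem_iota in p_D.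
Qed.

Lemma hit_not_linked D j : 0 < j -> hit D j -> ~~ linked D j.
Proof.
move=> j_gt0 [zeros ones]; apply/negP => /andP[/eqP adj0 /eqP adj1].
apply: (@positions_disjoint D (2 * j).-1).
  apply: positions_adjacent_cut j_gt0 _ adj0.
  by rewrite -[RHS]zeros; apply: eq_count => -[].
apply: positions_adjacent_cut j_gt0 _ adj1.
by rewrite -[RHS]ones; apply: eq_count => -[].
Qed.

Lemma hit_balanced_cut n (B C : {set 'I_n}) (v : nat) j :
  [disjoint B & C] -> #|[set x in B | x < v]| = j -> #|[set x in C | x < v]| = j ->
  hit [seq x \in C | x <- ord_sort (B :|: C)] j.
Proof.
move=> BC B_v C_v; set L := ord_sort _.
have zeros : count (fun x : 'I_n => (x < v) && (x \notin C)) L = j.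
  rewrite count_ord_sort -B_v; apply: eq_card => x; rewrite !inE.
  by case: (boolP (x \in C)) => [/(disjointFl BC)-> | _]; rewrite ?orbF ?andbT ?andbF.
have ones : count (fun x : 'I_n => (x < v) && (x \in C)) L = j.
  rewrite count_ord_sort -C_v; apply: eq_card => x; rewrite !inE.
  by case: (x \in C); rewrite ?orbT ?andbT ?andbF.
have cut : take (2 * j) L = filter (fun x : 'I_n => x < v) L.
  rewrite -take_count_ord_sort; congr take.
  rewrite -size_filter -(count_predC (mem C)) !count_filter mul2n -addnn -{1}ones -zeros.
  by congr (_ + _); apply: eq_count => x /=; rewrite andbC.
rewrite /hit -map_take cut !count_map !count_filter; split.
  by rewrite -[RHS]zeros; apply: eq_count => x /=; rewrite andbC.
by rewrite -[RHS]ones; apply: eq_count => x /=; rewrite andbC.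
Qed.

Section ThreeCycles.
Variables (n : nat) (s : {perm 'I_n}).
Implicit Types x b c : 'I_n.

Lemma val_cyc_min x : cyc_min s x = minn x (minn (s x) (s (s x))) :> nat.
Proof. by rewrite /cyc_min /min3; repeat case: ltnP => ? /=; lia. Qed.

Lemma val_cyc_max x : cyc_max s x = maxn x (maxn (s x) (s (s x))) :> nat.
Proof. by rewrite /cyc_max /max3; repeat case: ltnP => ? /=; lia. Qed.

Lemma cyc_min_cycle x : cyc_min s x \in [:: x; s x; s (s x)].
Proof. by rewrite /cyc_min /min3; repeat case: ifP => _; rewrite !inE eqxx ?orbT. Qed.

Lemma cyc_max_cycle x : cyc_max s x \in [:: x; s x; s (s x)].
Proof. by rewrite /cyc_max /max3; repeat case: ifP => _; rewrite !inE eqxx ?orbT. Qed.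

Lemma Bset_notin_Cset : [disjoint Bset s & Cset s].
Proof.
apply/pred0P => x /=; rewrite !inE; apply/negbTE; rewrite negb_and.
by case: eqP => [<- | _]; rewrite ?ltnn ?andbF ?orbT.
Qed.

Hypothesis s_3cycles : only_3cycles s.

Lemma perm3K x : s (s (s x)) = x.
Proof. by case: (s_3cycles x). Qed.

Lemma cycle_vals_uniq x :
  [/\ x != s x :> nat, x != s (s x) :> nat & s x != s (s x) :> nat].
Proof.
have sx_x : s x != x by case: (s_3cycles x).
have ssx_sx : s (s x) != s x by apply: contra sx_x => /eqP/perm_inj->.
have ssx_x : s (s x) != x by apply: contra sx_x => /eqP ssx; rewrite -{2}(perm3K x) ssx.
by split; rewrite eq_sym.
Qed.

Lemma cyc_min_perm x : cyc_min s (s x) = cyc_min s x.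
Proof. by apply: val_inj => /=; rewrite !val_cyc_min perm3K; lia. Qed.

Lemma cyc_max_perm x : cyc_max s (s x) = cyc_max s x.
Proof. by apply: val_inj => /=; rewrite !val_cyc_max perm3K; lia. Qed.

Lemma cyc_min_in_cycle x y : y \in [:: x; s x; s (s x)] -> cyc_min s y = cyc_min s x.
Proof. by rewrite !inE => /or3P[] /eqP->; rewrite ?cyc_min_perm. Qed.

Lemma cyc_max_in_cycle x y : y \in [:: x; s x; s (s x)] -> cyc_max s y = cyc_max s x.
Proof. by rewrite !inE => /or3P[] /eqP->; rewrite ?cyc_max_perm. Qed.

Lemma cyc_max_in_Cset x : cyc_max s x \in Cset s.
Proof. by rewrite inE (cyc_max_in_cycle (cyc_max_cycle x)). Qed.

Variant middle_spec b : bool -> Prop :=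
  | Middle123 of s (cyc_min s b) = b & s b = cyc_max s b & s (cyc_max s b) = cyc_min s b :
      middle_spec b true
  | Middle132 of s (cyc_min s b) = cyc_max s b & s (cyc_max s b) = b & s b = cyc_min s b :
      middle_spec b false.

Lemma middleP b : b \in Bset s -> middle_spec b (form123 s b).
Proof.
rewrite inE => /andP[min_b b_max]; rewrite /form123.
have := cyc_min_cycle b; have := cyc_max_cycle b; rewrite !inE.
case/or3P=> /eqP maxE; case/or3P=> /eqP minE; rewrite minE maxE in min_b b_max *; try lia.
  by rewrite perm3K eqxx; constructor; rewrite ?minE ?maxE ?perm3K.
have /negbTE-> : s (s b) != b by apply/eqP => E; rewrite E ltnn in b_max.
by constructor; rewrite ?minE ?maxE ?perm3K.
Qed.

Lemma form132_negb b : b \in Bset s -> form132 s b = ~~ form123 s b.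
Proof.
move=> bB; have := bB; rewrite inE => /andP[_ b_max].
rewrite /form132; case: (middleP bB) => [-> _ _ | -> _ _]; last by rewrite eqxx.
by apply/negbTE; apply/eqP => E; rewrite -E ltnn in b_max.
Qed.

Definition mid_of_max c := if s c == cyc_min s c then s (s c) else s c.

Lemma mid_of_max_cycle c : mid_of_max c \in [:: c; s c; s (s c)].
Proof. by rewrite /mid_of_max; case: ifP; rewrite !inE eqxx ?orbT. Qed.

Lemma mid_of_maxK b : b \in Bset s -> mid_of_max (cyc_max s b) = b.
Proof.
move=> bB; have := bB; rewrite inE => /andP[min_b _].
have min_max : cyc_min s (cyc_max s b) = cyc_min s b.
  exact/cyc_min_in_cycle/cyc_max_cycle.
rewrite /mid_of_max min_max; case: (middleP bB) => [s_min _ -> | _ -> _].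
  by rewrite eqxx s_min.
by case: eqP => // E; rewrite -E ltnn in min_b.
Qed.

Lemma mid_of_max_in_Bset c : c \in Cset s -> mid_of_max c \in Bset s.
Proof.
rewrite !inE => /eqP c_max.
rewrite (cyc_min_in_cycle (mid_of_max_cycle c)) (cyc_max_in_cycle (mid_of_max_cycle c)) -c_max.
case: (cycle_vals_uniq c) => /eqP ? /eqP ? /eqP ?.
move/(congr1 (@nat_of_ord n)): c_max; rewrite val_cyc_max val_cyc_min /mid_of_max.
by case: ifP; rewrite -val_eqE /= val_cyc_min; [move=> /eqP | move=> /negbT/eqP] => ? ?; lia.
Qed.

Lemma cyc_max_mid_of_max c : c \in Cset s -> cyc_max s (mid_of_max c) = c.
Proof. by rewrite inE => /eqP {2}->; apply/cyc_max_in_cycle/mid_of_max_cycle. Qed.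

Lemma card_Cset_below (v : nat) :
  (forall b, b \in Bset s -> b < v -> cyc_max s b < v) ->
  #|[set c in Cset s | c < v]| = #|[set b in Bset s | b < v]|.
Proof.
move=> closed.
have -> : [set c in Cset s | c < v] = cyc_max s @: [set b in Bset s | b < v].
  apply/setP => c; rewrite inE; apply/andP/imsetP => [[cC c_v] | [b]].
    exists (mid_of_max c); last by rewrite cyc_max_mid_of_max.
    have mB := mid_of_max_in_Bset cC; rewrite inE mB /=; apply: ltn_trans c_v.
    by move: mB; rewrite inE cyc_max_mid_of_max // => /andP[].
  by rewrite inE => /andP[bB b_v] ->; rewrite cyc_max_in_Cset closed.
apply: card_in_imset => b b' /setIdP[bB _] /setIdP[b'B _] /(congr1 mid_of_max).
by rewrite !mid_of_maxK.
Qed.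

Hypothesis s_avoids : avoids132 s.

Lemma form_change_max_lt b b' : b \in Bset s -> b' \in Bset s -> b < b' ->
  form123 s b != form123 s b' -> cyc_max s b < b'.
Proof.
move=> bB b'B b_b' forms; rewrite ltnNge; apply/negP => max_b'.
have b'_max : b' < cyc_max s b.
  rewrite ltn_neqAle max_b' andbT; apply: contraTneq b'B => /val_inj->.
  by rewrite (disjointFl Bset_notin_Cset) // cyc_max_in_Cset.
have := bB; rewrite inE => /andP[min_b b_maxb].
have := b'B; rewrite inE => /andP[_ b'_maxb'].
move: forms; case: (middleP bB) => E1 E2 E3; case: (middleP b'B) => F1 F2 F3 // _.
- apply: (s_avoids (i := cyc_min s b) (j := b) (k := cyc_max s b')) => //.
    exact: ltn_trans b'_maxb'.
  by rewrite E1 E2 F2 b_b'.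
- apply: (s_avoids (i := b) (j := b') (k := cyc_max s b)) => //.
  by rewrite E2 E3 F2 min_b; exact: ltn_trans b'_maxb'.
Qed.

Lemma form_change_closed b1 b2 : b1 \in Bset s -> b2 \in Bset s -> b1 < b2 ->
  form123 s b1 != form123 s b2 -> (forall b, b \in Bset s -> b < b2 -> b <= b1) ->
  forall b, b \in Bset s -> b < b2 -> cyc_max s b < b2.
Proof.
move=> b1B b2B b1_b2 forms between b bB b_b2.
have [same | ] := eqVneq (form123 s b) (form123 s b2); last exact: form_change_max_lt.
have b_b1 : b < b1.
  rewrite ltn_neqAle between // andbT; apply: contra forms => /eqP/val_inj <-.
  by rewrite same.
by apply: ltn_trans b1_b2; apply: form_change_max_lt; rewrite // same eq_sym.
Qed.

Lemma form_change_hit x0 i : i.+1 < size (Bsorted s) ->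
  form123 s (nth x0 (Bsorted s) i) != form123 s (nth x0 (Bsorted s) i.+1) ->
  hit (dyck_word s) i.+1.
Proof.
rewrite /Bsorted -/(ord_sort _) => i_L forms.
set b1 := nth x0 _ i in forms *; set b2 := nth x0 _ i.+1 in forms *.
have b1B : b1 \in Bset s by rewrite -mem_ord_sort mem_nth // ltnW.
have b2B : b2 \in Bset s by rewrite -mem_ord_sort mem_nth.
have b1_b2 : b1 < b2 := ord_sort_nth_lt x0 i_L.
have closed := form_change_closed b1B b2B b1_b2 forms (fun b => ord_sort_between i_L).
apply: (hit_balanced_cut (v := b2) Bset_notin_Cset); first exact: card_below_ord_sort.
by rewrite card_Cset_below // card_below_ord_sort.
Qed.
End ThreeCycles.

Lemma seq_at_Some (T : Type) (L : seq T) i x :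
  seq_at L i = Some x -> i < size L /\ nth x L i = x.
Proof.
rewrite /seq_at; case: (ltnP i (size L)) => i_L; last by rewrite nth_default ?size_map.
by rewrite (nth_map x) // => -[].
Qed.

Theorem lemma4p2 (m : nat) (s : {perm 'I_(3 * m)}) :
  1 <= m -> avoids132 s -> only_3cycles s ->
  forall (j : nat) (bj bj1 : 'I_(3 * m)),
    1 <= j -> j < m ->
    seq_at (Bsorted s) j.-1 = Some bj -> seq_at (Bsorted s) j = Some bj1 ->
    (same_free_block (dyck_word s) j j.+1 ->
       (form123 s bj && form123 s bj1) || (form132 s bj && form132 s bj1)) /\
    ((form123 s bj && form132 s bj1) || (form132 s bj && form123 s bj1) ->
       hit (dyck_word s) j).
Proof.
move=> _ s_avoids s_3cycles [//|i] bj bj1 _ _ at_i at_i1.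
have [i_L bjE] := seq_at_Some at_i; have [i1_L bj1E] := seq_at_Some at_i1.
have bjB : bj \in Bset s by rewrite -mem_ord_sort -bjE mem_nth.
have bj1B : bj1 \in Bset s by rewrite -mem_ord_sort -bj1E mem_nth.
have change_hit : form123 s bj != form123 s bj1 -> hit (dyck_word s) i.+1.
  by rewrite -{1}bjE -bj1E (set_nth_default bj) //; apply: form_change_hit.
rewrite !form132_negb //; split => [block | forms].
  have linked_i : linked (dyck_word s) i.+1 by apply: block; rewrite ?geq_minl ?leq_maxr.
  have [-> | /change_hit] := eqVneq (form123 s bj) (form123 s bj1); first by case: form123.
  by move/(hit_not_linked (ltn0Sn i)); rewrite linked_i.
by apply: change_hit; move: forms; case: (form123 s bj); case: (form123 s bj1).
Qed.
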